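(* Let $Q$ be a weakly compact convex subset of a Banach space $U$. Let $r>0$, let $\beta:Q\to[0,1)$, and let $\beta_n:Q\to\mathbb{R}$ ($n\geq1$) be functions with $\beta_n(p)\to\beta(p)$ for every $p\in Q$. Suppose $T:Q\to Q$ satisfies: for all $p,q\in Q$ and $n\geq1$, $\|p-q\|<r$ implies $\|T^np-T^nq\|\leq\beta_n(p)\|p-q\|$. If there exists $q_0\in Q$ such that the asymptotic radius of $\{T^nq_0\}_n$ relative to $Q$ is less than $r$, then $T$ has a unique fixed point.
   Context: For a bounded sequence $\{x_n\}_n$ in $U$, its asymptotic radius relative to $Q$ is $\inf_{y\in Q}\limsup_{n\to\infty}\|x_n-y\|$. *)

From HB Require Import structures.
From mathcomp Require Import all_boot all_order all_algebra.
From mathcomp Require Import all_classical all_reals all_analysis.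
Set Implicit Arguments. Unset Strict Implicit. Unset Printing Implicit Defensive.
Import Order.TTheory GRing.Theory Num.Theory.
Import numFieldNormedType.Exports.
Local Open Scope classical_set_scope.
Local Open Scope ring_scope.

Definition linear_functional (R : realType) (U : normedModType R) :=
  {linear U -> R^o}.
Definition dual_index (R : realType) (U : normedModType R) :=
  sig (fun f : linear_functional U => continuous (f : U -> R^o)).

Definition weak_topology (R : realType) (U : normedModType R) : Type :=
  @sup_topology U (dual_index U)
    (fun f => Topological.class (initial_topology (sval f : U -> R^o))).

HB.instance Definition _ (R : realType) (U : normedModType R) :=
  Choice.on (weak_topology U).
HB.instance Definition _ (R : realType) (U : normedModType R) :=
  Topological.on (weak_topology U).

Definition weakly_compact (R : realType) (U : normedModType R) (Q : set U) :=
  @compact (weak_topology U) Q.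

Definition asymptotic_radius (R : realType) (U : normedModType R)
    (Q : set U) (x : nat -> U) : \bar R :=
  ereal_inf [set limn_esup (fun n => (`|x n - y|)%:E) | y in Q].

From HB Require Import structures.
From mathcomp Require Import all_boot all_order all_algebra.
From mathcomp Require Import all_classical all_reals all_analysis.
From mathcomp Require Import lra.
Set Implicit Arguments.
Unset Strict Implicit.
Unset Printing Implicit Defensive.
Import Order.TTheory GRing.Theory Num.Theory.
Import numFieldNormedType.Exports.
Local Open Scope classical_set_scope.
Local Open Scope ring_scope.

(* Let rho be the infimum of the t such that the orbit
   x_n = T^n q0 eventually stays within t of some point of Q.  For t > rho the
   sets of such points are convex, nonempty and decreasing, so weak compactness
   gives a weak cluster point y0 of all of them.  A weak cluster point of a
   convex set is a norm limit of its points (separation by Hahn-Banach), hence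
   x_n is eventually within s of y0 for every s > rho.  If rho > 0, pick m with
   beta_m(y0) <= b < 1: then x_n is eventually within b (rho + eps) < rho of
   T^m y0, contradicting the definition of rho.  So x_n --> y0, and the
   estimate for n = 1 shows T y0 = y0.
   Uniqueness: if p <> q are fixed, cut [p, q] into N steps of length d < r;
   walking along it, the asymptotic distance from the orbit of p grows by at
   most b d < d per step, so |p - q| < N d = |p - q|. *)

Section hahn_banach.
Variables (R : realType) (V : lmodType R) (p : V -> R).
Hypothesis p_subadd : forall u v, p (u + v) <= p u + p v.
Hypothesis p_homo : forall s v, 0 < s -> p (s *: v) <= s * p v.

Lemma sublinearZ s v : 0 < s -> p (s *: v) = s * p v.
Proof.
move=> s_gt0; apply/eqP; rewrite eq_le p_homo //=.
have := @p_homo s^-1 (s *: v); rewrite invr_gt0 => /(_ s_gt0).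
by rewrite scalerA mulVf ?gt_eqF // scale1r ler_pdivlMl.
Qed.

(* A linear functional on a subspace of [V], dominated by [p], given by its
   graph so that Zorn's lemma applies to sets of pairs. *)
Definition dominated_graph (G : set (V * R)) :=
  [/\ forall u a v b, G (u, a) -> G (v, b) -> G (u + v, a + b),
      forall s u a, G (u, a) -> G (s *: u, s * a),
      forall a, G (0, a) -> a = 0
    & forall u a, G (u, a) -> a <= p u].

Lemma dominated_graph_functional G u a b :
  dominated_graph G -> G (u, a) -> G (u, b) -> a = b.
Proof.
case=> Gadd Gscale G0 _ Gua Gub; apply/eqP; rewrite -subr_eq0; apply/eqP/G0.
have := Gadd _ _ _ _ Gua (Gscale (-1) _ _ Gub).
by rewrite scaleN1r mulN1r subrr.
Qed.

Lemma dominated_graph_bigcup (F : set (set (V * R))) :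
  F `<=` dominated_graph -> total_on F subset ->
  dominated_graph (\bigcup_(G in F) G).
Proof.
move=> Fdom Ftot; split.
- move=> u a v b [G FG Gua] [G' FG' Gvb].
  have [GG'|G'G] := Ftot _ _ FG FG'.
    by exists G' => //; case: (Fdom _ FG') => + _ _ _; apply; first exact: GG'.
  by exists G => //; case: (Fdom _ FG) => + _ _ _; apply => //; exact: G'G.
- move=> s u a [G FG Gua]; exists G => //.
  by case: (Fdom _ FG) => _ + _ _; apply.
- by move=> a [G FG G0a]; case: (Fdom _ FG) => _ _ + _; apply.
- by move=> u a [G FG Gua]; case: (Fdom _ FG) => _ _ _; apply.
Qed.

Lemma dominated_graph_extension_bound G v0 :
  dominated_graph G -> G (0, 0) ->
  exists c, (forall w b, G (w, b) -> b - p (w - v0) <= c) /\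
            (forall w b, G (w, b) -> c <= p (w + v0) - b).
Proof.
case=> Gadd _ _ Gdom G00.
pose E := [set wb.2 - p (wb.1 - v0) | wb in G].
have E_ub w' b' : G (w', b') -> ubound E (p (w' + v0) - b').
  move=> Gwb' _ [[w b] Gwb <-] /=.
  have := Gdom _ _ (Gadd _ _ _ _ Gwb Gwb').
  have := p_subadd (w - v0) (w' + v0); rewrite addrACA addNr addr0; lra.
have E_neq0 : E !=set0 by exists (0 - p (0 - v0)), (0, 0).
exists (sup E); split => [w b Gwb|w b Gwb]; last exact: ge_sup (E_ub _ _ Gwb).
by apply: ub_le_sup; [exists (p (0 + v0) - 0); exact: E_ub | exists (w, b)].
Qed.

Section extension.
Variables (G : set (V * R)) (v0 : V) (c : R).
Hypothesis G_dom : dominated_graph G.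
Hypothesis c_ge : forall w b, G (w, b) -> b - p (w - v0) <= c.
Hypothesis c_le : forall w b, G (w, b) -> c <= p (w + v0) - b.
Hypothesis G00 : G (0, 0).

Lemma extension_dominated u b t : G (u, b) -> b + t * c <= p (u + t *: v0).
Proof.
case: G_dom => _ Gscale _ Gdom Gub.
have [t_lt0|t_gt0|->] := ltgtP t 0;
  last by rewrite mul0r scale0r !addr0; exact: Gdom.
- have s_gt0 : 0 < - t by rewrite oppr_gt0.
  have := c_ge (Gscale (- t)^-1 _ _ Gub).
  rewrite lerBlDr -(ler_pM2l s_gt0) mulrDr mulrA mulfV ?gt_eqF // mul1r.
  rewrite -sublinearZ // scalerBr scalerA mulfV ?gt_eqF // scale1r.
  rewrite scaleNr opprK.
  lra.
- have := c_le (Gscale t^-1 _ _ Gub).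
  rewrite -(ler_pM2l t_gt0) mulrBr mulrA mulfV ?gt_eqF // mul1r.
  rewrite -sublinearZ // scalerDr scalerA mulfV ?gt_eqF // scale1r.
  lra.
Qed.

Lemma dominated_graph_extend :
  ~ (exists a, G (v0, a)) -> exists2 G', dominated_graph G' & G `<` G'.
Proof.
case: G_dom => Gadd Gscale G0 _ v0_notin.
pose G' := [set (wb.1 + t *: v0, wb.2 + t * c) | wb in G & t in [set: R]].
exists G'; last first.
  split=> [[u b] Gub|G'G].
    by exists (u, b) => //; exists 0 => //=; rewrite scale0r mul0r !addr0.
  apply: v0_notin; exists c; apply: G'G; exists (0, 0) => //; exists 1 => //=.
  by rewrite scale1r mul1r !add0r.
split.
- move=> _ _ _ _ [[u1 b1] G1 [t1 _ [<- <-]]] [[u2 b2] G2 [t2 _ [<- <-]]].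
  exists (u1 + u2, b1 + b2); first exact: Gadd.
  exists (t1 + t2) => //=.
  by rewrite scalerDl mulrDl addrACA [in X in (_, X)]addrACA.
- move=> s _ _ [[u b] Gub [t _ [<- <-]]].
  exists (s *: u, s * b); first exact: Gscale.
  by exists (s * t) => //=; rewrite scalerDr mulrDr scalerA mulrA.
- move=> _ [[u b] Gub [t _ [u_eq <-]]] /=.
  have [t0|t_neq0] := eqVneq t 0.
    move: u_eq; rewrite t0 scale0r mul0r !addr0 => u0.
    by apply: G0; rewrite -u0.
  exfalso; apply: v0_notin; exists (- t^-1 * b).
  have -> : v0 = - t^-1 *: u.
    apply: (scalerI t_neq0); rewrite scalerA mulrN mulfV // scaleN1r.
    by apply/eqP; rewrite -addr_eq0 addrC u_eq.
  exact: Gscale.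
- by move=> _ _ [[u b] Gub [t _ [<- <-]]]; exact: extension_dominated.
Qed.
End extension.

Lemma dominated_graph_set1_0 : dominated_graph [set (0, 0)].
Proof.
split=> [u a v b [-> ->] [-> ->]|s u a [-> ->]|a [->]|u a [-> ->]] //.
- by rewrite !addr0.
- by rewrite scaler0 mulr0.
- by have := p_subadd 0 0; rewrite addr0; lra.
Qed.

Theorem hahn_banach : exists f : {linear V -> R^o}, forall v, f v <= p v.
Proof.
have [A [A_dom A_max]] := Zorn_bigcup dominated_graph_bigcup.
have A00 : A (0, 0).
  have [[[w a] Awa]|A0] := pselect (exists wa, A wa).
    case: A_dom => _ Ascale _ _.
    by have := Ascale 0 _ _ Awa; rewrite scale0r mul0r.
  exfalso; apply: (A_max _ _ dominated_graph_set1_0).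
  by split=> [wa Awa|sub]; case: A0; [exists wa | exists (0, 0); apply: sub].
have A_total v : exists a, A (v, a).
  apply: contrapT => v_notin.
  have [c [c_ge c_le]] := dominated_graph_extension_bound v A_dom A00.
  have [G' G'_dom AG'] := dominated_graph_extend A_dom c_ge c_le A00 v_notin.
  exact: A_max AG' G'_dom.
have [f Af] := choice A_total.
have f_lin : linear_for *:%R (f : V -> R^o).
  move=> a u v; apply: (dominated_graph_functional A_dom (Af _)).
  by case: A_dom => Aadd Ascale _ _; exact: Aadd (Ascale _ _ _ (Af u)) (Af v).
pose F : {linear V -> R^o} :=
  HB.pack (f : V -> R^o) (GRing.isLinear.Build R V R^o _ _ f_lin).
exists F => v /=.
by case: A_dom => _ _ _; apply.
Qed.

End hahn_banach.

Lemma convex_setP (R : numDomainType) (M : lmodType R) (A : set M) :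
  convex_set (A : set (convex_lmodType M)) <->
  forall x y (a : R), A x -> A y -> 0 <= a <= 1 -> A (a *: x + (1 - a) *: y).
Proof.
split=> [Aconv x y a Ax Ay /andP[a0 a1]|Aconv x y l /set_mem Ax /set_mem Ay].
  by have := Aconv x y (Itv01 a0 a1) (mem_set Ax) (mem_set Ay); rewrite inE.
by apply/mem_set/Aconv => //; rewrite ge0 le1.
Qed.

Section convex_combination.
Variables (R : realType) (U : normedModType R).

Lemma conv_subr (x y z : U) (a : R) :
  a *: x + (1 - a) *: y - z = a *: (x - z) + (1 - a) *: (y - z).
Proof. by rewrite !scalerBr addrACA -opprD -scalerDl subrKC scale1r. Qed.

Lemma norm_conv_le (x y : U) (a t : R) : 0 <= a <= 1 ->
  `|x| <= t -> `|y| <= t -> `|a *: x + (1 - a) *: y| <= t.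
Proof.
move=> /andP[a0 a1] xt yt; apply: le_trans (ler_normD _ _) _.
rewrite !normrZ (ger0_norm a0) ger0_norm ?subr_ge0 //.
have : a * `|x| <= a * t by rewrite ler_wpM2l.
have : (1 - a) * `|y| <= (1 - a) * t by rewrite ler_wpM2l ?subr_ge0.
lra.
Qed.

End convex_combination.

Section separation.
Variables (R : realType) (U : normedModType R) (C : set U) (y : U) (d : R).
Hypothesis C_convex : convex_set (C : set (convex_lmodType U)).
Hypothesis C_neq0 : C !=set0.
Hypothesis C_far : forall c, C c -> d <= `|y - c|.

(* [gauge] is sublinear, bounded by the norm and at most [-d] on [y - C]: a
   linear functional below it separates [y] from [C] by [d]. *)
Let gauge_set v :=
  [set `|v + t *: (c - y)| - t * d | t in [set t | 0 <= t] & c in C].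
Let gauge v := inf (gauge_set v).

Let gauge_le v t c : 0 <= t -> C c -> gauge v <= `|v + t *: (c - y)| - t * d.
Proof.
move=> t0 Cc; apply: ge_inf; last by exists t => //; exists c.
exists (- `|v|) => _ [s /= s0 [e Ce <-]].
have : s * d <= `|s *: (e - y)|.
  by rewrite normrZ ger0_norm // ler_wpM2l // distrC C_far.
have := ler_normD (- v) (v + s *: (e - y)); rewrite addKr normrN.
lra.
Qed.

Let gauge_ge v x :
  (forall t c, 0 <= t -> C c -> x <= `|v + t *: (c - y)| - t * d) ->
  x <= gauge v.
Proof.
move=> xle; have [c0 Cc0] := C_neq0.
apply: lb_le_inf => [|_ [t t0 [c Cc <-]]]; last exact: xle.
by exists (`|v + 0 *: (c0 - y)| - 0 * d), 0 => //=; exists c0.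
Qed.

Let gauge_le_norm v : gauge v <= `|v|.
Proof.
have [c0 Cc0] := C_neq0.
apply: le_trans (gauge_le v (lexx 0) Cc0) _.
by rewrite scale0r mul0r addr0 subr0.
Qed.

Let gauge_subr c : C c -> gauge (y - c) <= - d.
Proof.
move=> Cc; apply: le_trans (gauge_le _ ler01 Cc) _.
by rewrite scale1r mul1r addrA subrK subrr normr0 sub0r.
Qed.

Let gauge_homo s v : 0 < s -> gauge (s *: v) <= s * gauge v.
Proof.
move=> s_gt0; rewrite -ler_pdivrMl //; apply: gauge_ge => t c t0 Cc.
rewrite ler_pdivrMl //.
apply: le_trans (gauge_le _ (mulr_ge0 (ltW s_gt0) t0) Cc) _.
by rewrite -scalerA -scalerDr normrZ gtr0_norm // mulrBr mulrA.
Qed.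

Let gauge_subadd u v : gauge (u + v) <= gauge u + gauge v.
Proof.
suff le_sum t1 c1 t2 c2 : 0 <= t1 -> C c1 -> 0 <= t2 -> C c2 ->
    gauge (u + v) <= (`|u + t1 *: (c1 - y)| - t1 * d) +
                      (`|v + t2 *: (c2 - y)| - t2 * d).
  rewrite -lerBlDl; apply: gauge_ge => t2 c2 t2_ge0 Cc2.
  rewrite lerBlDl -lerBlDr; apply: gauge_ge => t1 c1 t1_ge0 Cc1.
  by rewrite lerBlDr; exact: le_sum.
move=> t1_ge0 Cc1 t2_ge0 Cc2.
have [t12_0|t12_neq0] := eqVneq (t1 + t2) 0.
  have [-> ->] : t1 = 0 /\ t2 = 0 by split; lra.
  rewrite !scale0r !mul0r !addr0 !subr0.
  exact: le_trans (gauge_le_norm _) (ler_normD _ _).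
have t12_gt0 : 0 < t1 + t2 by rewrite lt_neqAle eq_sym t12_neq0 addr_ge0.
pose a := t1 / (t1 + t2).
have a01 : 0 <= a <= 1.
  by rewrite divr_ge0 ?addr_ge0 //= ler_pdivrMr // mul1r lerDl.
have Cc := (convex_setP C).1 C_convex _ _ _ Cc1 Cc2 a01.
apply: le_trans (gauge_le (u + v) (ltW t12_gt0) Cc) _.
have -> : (t1 + t2) *: (a *: c1 + (1 - a) *: c2 - y) =
          t1 *: (c1 - y) + t2 *: (c2 - y).
  rewrite conv_subr scalerDr !scalerA mulrBr mulr1 [_ * a]mulrC divfK //.
  by rewrite [t1 + t2]addrC addrK.
rewrite addrACA mulrDl.
have := ler_normD (u + t1 *: (c1 - y)) (v + t2 *: (c2 - y)).
lra.
Qed.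

Theorem separation :
  exists f : dual_index U, forall c, C c -> sval f y + d <= sval f c.
Proof.
have [f f_le] := hahn_banach gauge_subadd gauge_homo.
have f_norm v : `|f v| <= `|v|.
  rewrite ler_norml (le_trans (f_le v) (gauge_le_norm v)) andbT lerNl.
  by rewrite -linearN (le_trans (f_le (- v))) // -(normrN v) gauge_le_norm.
have f_cont : continuous (f : U -> R^o).
  apply: bounded_linear_continuous; apply/bounded_funP => r.
  by exists r => v vr; exact: le_trans (f_norm v) vr.
exists (exist _ f f_cont) => c Cc /=.
have := le_trans (f_le (y - c)) (gauge_subr Cc); rewrite linearB /=.
lra.
Qed.

End separation.

Lemma weak_nbhs_lt (R : realType) (U : normedModType R) (f : dual_index U)
    (y : U) (a : R) :
  sval f y < a -> @nbhs _ (weak_topology U) y [set z | sval f z < a].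
Proof.
move=> fy_lt.
have [cvg_weak _] := @cvg_sup U (dual_index U)
  (fun g => Topological.class (initial_topology (sval g : U -> R^o)))
  (@nbhs _ (weak_topology U) y) y (@nbhs_filter (weak_topology U) y).
apply: (cvg_weak cvg_id f); apply: open_nbhs_nbhs; split => //.
have /continuousP f_cont := @initial_continuous U R^o (sval f).
exact: (f_cont [set r : R^o | r < a] (@open_lt R a)).
Qed.

Lemma weak_closure_convex_approx (R : realType) (U : normedModType R)
    (C : set U) (y : U) :
  convex_set (C : set (convex_lmodType U)) -> @closure (weak_topology U) C y ->
  forall e, 0 < e -> exists2 c, C c & `|y - c| < e.
Proof.
move=> C_convex y_cl e e_gt0; apply: contrapT => C_near.
have C_far c : C c -> e <= `|y - c|.
  by move=> Cc; rewrite leNgt; apply/negP => lt_e; apply: C_near; exists c.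
have C_neq0 : C !=set0 by have [c [Cc _]] := y_cl setT filterT; exists c.
have [f f_sep] := separation C_convex C_neq0 C_far.
have fy_lt : sval f y < sval f y + e by rewrite ltrDl.
have [z [Cz /= fz_lt]] := y_cl _ (weak_nbhs_lt fy_lt).
by have := f_sep z Cz; rewrite leNgt fz_lt.
Qed.

Definition asymptotic_bounds (R : realType) (U : normedModType R) (Q : set U)
    (x : nat -> U) :=
  [set t : R | exists2 y, Q y & \forall n \near \oo, `|x n - y| <= t].

Section asymptotic_bounds.
Variables (R : realType) (U : normedModType R) (Q : set U) (x : nat -> U).

Lemma asymptotic_radius_lt (r : R) : (asymptotic_radius Q x < r%:E)%E ->
  exists2 t, t < r & asymptotic_bounds Q x t.
Proof.
move=> /ereal_inf_lt[_ [y Qy <-]].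
rewrite /limn_esup limf_esupE => /ereal_inf_lt[_ [V near_V <-]].
have sup_ub n : V n ->
    (`|x n - y|%:E <= ereal_sup [set `|x k - y|%:E | k in V])%E.
  by move=> Vn; apply: ereal_sup_ubound; exists n.
have [n Vn] := filter_ex near_V.
case: (ereal_sup _) sup_ub (sup_ub n Vn) => [t sup_ub _ | // | //].
rewrite lte_fin => t_lt_r; exists t => //; exists y => //.
by apply: filterS near_V => k /sup_ub; rewrite lee_fin.
Qed.

Lemma inf_asymptotic_bounds_le t :
  asymptotic_bounds Q x t -> inf (asymptotic_bounds Q x) <= t.
Proof.
move=> x_t; apply: ge_inf x_t; exists 0 => s [y _ near_y].
by have [n] := filter_ex near_y; exact: le_trans.
Qed.

Lemma asymptotic_bounds_gt_inf : asymptotic_bounds Q x !=set0 ->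
  forall t, inf (asymptotic_bounds Q x) < t -> asymptotic_bounds Q x t.
Proof.
move=> bounds_neq0 t /(inf_lt bounds_neq0)[t' [y Qy near_y] t'_lt].
by exists y => //; apply: filterS near_y => n /le_trans; apply; exact: ltW.
Qed.

End asymptotic_bounds.

Section asymptotic_center.
Variables (R : realType) (U : normedModType R) (Q : set U) (x : nat -> U).
Hypothesis Q_wcompact : weakly_compact Q.
Hypothesis Q_convex : convex_set (Q : set (convex_lmodType U)).

Let ball_at_infinity t :=
  [set y | Q y /\ \forall n \near \oo, `|x n - y| <= t].

Let ball_at_infinity_convex t :
  convex_set (ball_at_infinity t : set (convex_lmodType U)).
Proof.
apply/convex_setP => c1 c2 a [Qc1 near_c1] [Qc2 near_c2] a01.
split; first exact: (convex_setP Q).1 Q_convex _ _ _ Qc1 Qc2 a01.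
apply: filterS2 near_c1 near_c2 => n c1_le c2_le.
by rewrite distrC conv_subr norm_conv_le // distrC.
Qed.

Lemma asymptotic_center (rho : R) :
  (forall t, rho < t -> asymptotic_bounds Q x t) ->
  exists2 y0, Q y0 & forall s, rho < s -> \forall n \near \oo, `|x n - y0| <= s.
Proof.
move=> balls_neq0.
pose F := filter_from [set t | rho < t] ball_at_infinity.
have F_proper : ProperFilter F.
  apply: filter_from_proper; last by move=> t /balls_neq0 [y]; exists y.
  apply: filter_from_filter; first by exists (rho + 1); rewrite /= ltrDl.
  move=> i j rho_i rho_j; exists (Order.min i j).
    by rewrite /= lt_min rho_i.
  move=> y [Qy near_y]; split; split => //;
    apply: filterS near_y => n /le_trans.
    by apply; rewrite ge_min lexx.
  by apply; rewrite ge_min lexx orbT.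
have FQ : F Q by exists (rho + 1); [rewrite /= ltrDl | move=> y []].
have [y0 [Qy0 y0_cluster]] := Q_wcompact F_proper FQ.
exists y0 => // s rho_s; pose t := (rho + s) / 2.
have rho_t : rho < t by rewrite /t; lra.
have y0_cl : @closure (weak_topology U) (ball_at_infinity t) y0.
  by move=> B; apply: y0_cluster; exists t.
have st_gt0 : 0 < s - t by rewrite /t; lra.
have [c [_ near_c] y0_c] :=
  weak_closure_convex_approx (@ball_at_infinity_convex t) y0_cl st_gt0.
apply: filterS near_c => n xc_le.
have := ler_normD (x n - c) (c - y0); rewrite addrA subrK distrC in y0_c *.
lra.
Qed.

End asymptotic_center.

Section asymptotic_contraction.
Variables (R : realType) (U : normedModType R) (Q : set U) (r : R).
Variables (beta : U -> R) (betan : nat -> U -> R) (T : U -> U).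
Hypothesis r_gt0 : 0 < r.
Hypothesis beta_lt1 : forall p, Q p -> 0 <= beta p < 1.
Hypothesis betan_cvg : forall p, Q p -> betan n p @[n --> \oo] --> beta p.
Hypothesis T_Q : forall p, Q p -> Q (T p).
Hypothesis T_lip : forall p q (n : nat), Q p -> Q q -> (0 < n)%N ->
  `|p - q| < r -> `|iter n T p - iter n T q| <= betan n p * `|p - q|.

Lemma iter_Q n p : Q p -> Q (iter n T p).
Proof. by move=> Qp; elim: n => //= n; exact: T_Q. Qed.

Lemma betan_near_lt1 p : Q p ->
  exists2 b, 0 <= b < 1 & \forall n \near \oo, betan n p <= b.
Proof.
move=> Qp; have /andP[beta_ge0 beta_lt1p] := beta_lt1 Qp.
have beta_lt : beta p < (1 + beta p) / 2 by lra.
exists ((1 + beta p) / 2); first by apply/andP; split; lra.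
near=> n; apply/ltW; near: n; exact: cvgr_lt (betan_cvg Qp) _ beta_lt.
Unshelve. all: by end_near.
Qed.

Lemma iter_dist_near_step p a a' c : Q a -> Q a' -> `|a - a'| < r ->
  (\forall n \near \oo, `|iter n T p - iter n T a| <= c) ->
  exists2 b, b < 1 &
    \forall n \near \oo, `|iter n T p - iter n T a'| <= c + b * `|a - a'|.
Proof.
move=> Qa Qa' aa'_lt near_a.
have [b /andP[_ b_lt1] near_b] := betan_near_lt1 Qa.
exists b => //; near=> n.
have n_gt0 : (0 < n)%N by near: n; exact: nbhs_infty_gt.
have Tpa_le : `|iter n T p - iter n T a| <= c by near: n.
have bn_le : betan n a <= b by near: n.
have := T_lip Qa Qa' n_gt0 aa'_lt.
have := ler_normD (iter n T p - iter n T a) (iter n T a - iter n T a').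
rewrite addrA subrK.
have : betan n a * `|a - a'| <= b * `|a - a'| by rewrite ler_wpM2r.
lra.
Unshelve. all: by end_near.
Qed.

Section orbit.
Variable q0 : U.
Hypothesis Qq0 : Q q0.

Lemma orbit_near_iter y m s b : Q y -> (0 < m)%N -> s < r -> 0 <= b ->
  betan m y <= b -> (\forall n \near \oo, `|iter n T q0 - y| <= s) ->
  \forall n \near \oo, `|iter n T q0 - iter m T y| <= b * s.
Proof.
move=> Qy m_gt0 s_lt_r b_ge0 bm_le near_y; near=> n.
have m_le_n : (m <= n)%N by near: n; exact: nbhs_infty_ge.
have near_nm : `|iter (n - m) T q0 - y| <= s.
  by near: n; exact: cvg_subnr near_y.
rewrite -(subnKC m_le_n) iterD distrC.
apply: le_trans (T_lip Qy (iter_Q _ Qq0) m_gt0 _) _.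
  by rewrite distrC; lra.
apply: le_trans (ler_wpM2r (normr_ge0 _) bm_le) _.
by rewrite ler_wpM2l // distrC.
Unshelve. all: by end_near.
Qed.

Lemma orbit_radius_le0 y0 rho : Q y0 -> rho < r ->
  (forall t, asymptotic_bounds Q (fun n => iter n T q0) t -> rho <= t) ->
  (forall s, rho < s -> \forall n \near \oo, `|iter n T q0 - y0| <= s) ->
  rho <= 0.
Proof.
move=> Qy0 rho_lt_r rho_lb near_y0; rewrite leNgt; apply/negP => rho_gt0.
have [b /andP[b_ge0 b_lt1] near_b] := betan_near_lt1 Qy0.
near \oo => m.
(* small enough that rho + eps < r and b * (rho + eps) < rho *)
pose eps := Order.min ((r - rho) / 2) ((1 - b) * rho / 2).
have eps_gt0 : 0 < eps by rewrite lt_min; apply/andP; split; [lra | nra].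
have eps_le1 : eps <= (r - rho) / 2 by rewrite ge_min lexx.
have eps_le2 : eps <= (1 - b) * rho / 2 by rewrite ge_min lexx orbT.
have : rho <= b * (rho + eps).
  apply: rho_lb; exists (iter m T y0); first exact: iter_Q.
  apply: orbit_near_iter => //; last by apply: near_y0; lra.
  - by near: m; exact: nbhs_infty_gt.
  - lra.
  - by near: m.
nra.
Unshelve. all: by end_near.
Qed.

Lemma orbit_limit_fixed y : Q y -> iter n T q0 @[n --> \oo] --> y -> T y = y.
Proof.
move=> Qy orbit_y.
have shift_y : iter n.+1 T q0 @[n --> \oo] --> y.
  by move: orbit_y; rewrite -cvg_shiftS.
have shift_Ty : iter n.+1 T q0 @[n --> \oo] --> T y.
  apply/cvgrPdist_le => e e_gt0; pose B := `|betan 1 y| + 1.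
  have B_gt0 : 0 < B by rewrite ltr_pwDr ?normr_ge0.
  pose delta := Order.min (r / 2) (e / B).
  have delta_gt0 : 0 < delta by rewrite lt_min divr_gt0 //= divr_gt0.
  have delta_le1 : delta <= r / 2 by rewrite ge_min lexx.
  have delta_le2 : delta * B <= e by rewrite -ler_pdivlMr // ge_min lexx orbT.
  near=> n.
  have near_n : `|y - iter n T q0| <= delta.
    by near: n; exact: (cvgrPdist_le _ _).1 orbit_y _ delta_gt0.
  have near_lt_r : `|y - iter n T q0| < r by lra.
  apply: le_trans (T_lip Qy (iter_Q n Qq0) (ltn0Sn 0) near_lt_r) _.
  apply: le_trans (ler_wpM2r (normr_ge0 _) (ler_norm _)) _.
  apply: le_trans (ler_wpM2l (normr_ge0 _) near_n) _.
  rewrite /B mulrDr mulr1 in delta_le2; lra.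
exact: cvg_unique shift_Ty shift_y.
Unshelve. all: by end_near.
Qed.

End orbit.

Lemma iter_dist_chain p (a : nat -> U) d M :
  (forall k, (k <= M.+1)%N -> Q (a k)) -> (forall k, `|a k - a k.+1| = d) ->
  0 < d -> d < r -> a 0%N = p ->
  exists2 c, c < M.+1%:R * d &
    \forall n \near \oo, `|iter n T p - iter n T (a M.+1)| <= c.
Proof.
move=> Qa a_step d_gt0 d_lt_r a0.
have step k c : (k <= M)%N ->
    (\forall n \near \oo, `|iter n T p - iter n T (a k)| <= c) ->
    exists2 c', c' < c + d &
      \forall n \near \oo, `|iter n T p - iter n T (a k.+1)| <= c'.
  move=> kM near_c.
  have [b b_lt1] := iter_dist_near_step (Qa k (leqW kM)) (Qa k.+1 kM)
    ltac:(by rewrite a_step) near_c.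
  by rewrite a_step => near_b; exists (c + b * d); rewrite // ltrD2l gtr_pMl.
suff chain k : (k <= M)%N -> exists2 c, c < k.+1%:R * d &
    \forall n \near \oo, `|iter n T p - iter n T (a k.+1)| <= c.
  exact: chain.
elim: k => [|k IH] kM.
  have near_a0 : \forall n \near \oo, `|iter n T p - iter n T (a 0%N)| <= 0.
    by apply: nearW => n; rewrite a0 subrr normr0.
  have [c c_lt near_c] := step 0%N 0 isT near_a0.
  by exists c; rewrite // mul1r -(add0r d).
have [c c_lt near_c] := IH (ltnW kM).
have [c' c'_lt near_c'] := step k.+1 c kM near_c.
by exists c' => //; rewrite -[k.+2]addn1 natrD mulrDl mul1r; lra.
Qed.

Hypothesis Q_convex : convex_set (Q : set (convex_lmodType U)).

Lemma fixed_point_unique p q : Q p -> Q q -> T p = p -> T q = q -> p = q.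
Proof.
move=> Qp Qq Tp Tq; apply/eqP; apply: contraT => p_neq_q.
pose D := `|q - p|; have D_gt0 : 0 < D by rewrite normr_gt0 subr_eq0 eq_sym.
pose N := (Num.truncn (D / r)).+1.
have N_gt0 : 0 < N%:R :> R by rewrite ltr0n.
pose d := D / N%:R; have d_gt0 : 0 < d by rewrite divr_gt0.
have d_lt_r : d < r.
  by rewrite /d ltr_pdivrMr // mulrC -ltr_pdivrMr //; exact: truncnS_gt.
pose a (k : nat) := p + (k%:R / N%:R) *: (q - p).
have Qa k : (k <= N)%N -> Q (a k).
  move=> kN; have -> : a k = (k%:R / N%:R) *: q + (1 - k%:R / N%:R) *: p.
    by rewrite /a scalerBr scalerBl scale1r addrCA.
  apply: (convex_setP Q).1 => //.
  by rewrite divr_ge0 //= ler_pdivrMr // mul1r ler_nat.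
have a_step k : `|a k - a k.+1| = d.
  rewrite /a opprD addrACA subrr add0r -scalerBl -mulrBl -natr1 opprD addrA.
  by rewrite subrr add0r mulN1r normrZ normrN normfV ger0_norm // mulrC.
have a0 : a 0%N = p by rewrite /a mul0r scale0r addr0.
have [c c_lt /filter_ex[n]] := iter_dist_chain Qa a_step d_gt0 d_lt_r a0.
have aN : a N = q by rewrite /a divff ?gt_eqF // scale1r addrC subrK.
have c_lt_D : c < D by rewrite -[D](divfK (lt0r_neq0 N_gt0)) mulrC.
by rewrite aN !iter_fix // distrC leNgt c_lt_D.
Qed.

End asymptotic_contraction.

Theorem mainTheorem7 (R : realType) (U : completeNormedModType R)
  (Q : set U) (r : R) (beta : U -> R) (betan : nat -> U -> R) (T : U -> U) :
  weakly_compact Q ->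
  convex_set (Q : set (convex_lmodType U)) ->
  0 < r ->
  (forall p, Q p -> 0 <= beta p < 1) ->
  (forall p, Q p -> betan n p @[n --> \oo] --> beta p) ->
  (forall p, Q p -> Q (T p)) ->
  (forall p q (n : nat), Q p -> Q q -> (0 < n)%N -> `|p - q| < r ->
     `|iter n T p - iter n T q| <= betan n p * `|p - q|) ->
  (exists2 q0, Q q0 &
     (asymptotic_radius Q (fun n => iter n T q0) < r%:E)%E) ->
  exists! p, Q p /\ T p = p.
Proof.
move=> Q_wc Q_convex r_gt0 beta_lt1 betan_cvg T_Q T_lip [q0 Qq0 radius_lt].
pose x n := iter n T q0.
have [t t_lt_r x_t] := asymptotic_radius_lt radius_lt.
pose rho := inf (asymptotic_bounds Q x).
have [y0 Qy0 y0_center] :=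
  asymptotic_center Q_wc Q_convex (asymptotic_bounds_gt_inf (ex_intro _ t x_t)).
have rho_lt_r : rho < r := le_lt_trans (inf_asymptotic_bounds_le x_t) t_lt_r.
have rho_le0 : rho <= 0 := orbit_radius_le0 beta_lt1 betan_cvg T_Q T_lip Qq0 Qy0
  rho_lt_r (@inf_asymptotic_bounds_le _ _ _ _) y0_center.
have x_cvg : x @ \oo --> y0.
  by apply/cvgrPdistC_le => e e_gt0; apply: y0_center; lra.
have Ty0 : T y0 = y0 := orbit_limit_fixed r_gt0 T_Q T_lip Qq0 Qy0 x_cvg.
exists y0; split=> [|p [Qp Tp]]; first by split.
exact: (fixed_point_unique r_gt0 beta_lt1 betan_cvg T_lip Q_convex
  Qy0 Qp Ty0 Tp).
Qed.
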